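(* Let $m\ge 2$, $k\ge 1$, $n\ge 1$, and let $\mathcal{A}=(a_{i_1i_2\cdots i_m})\in\mathbb{C}^{[m,n]}$ and $\mathcal{B}=(b_{i_1i_2\cdots i_k})\in\mathbb{C}^{[k,n]}$. Then: (1) $r_i(\mathcal{A}\mathcal{B})\le r_i(\mathcal{A})\,(R(\mathcal{B}))^{m-1}$ for all $i\in[n]$; (2) if $\mathcal{A}$ and $\mathcal{B}$ are nonnegative tensors, then for all $i\in[n]$, \[r_i(\mathcal{A}\mathcal{B})=\sum_{i_2,\ldots,i_m=1}^n a_{ii_2\cdots i_m}\, r_{i_2}(\mathcal{B})\cdots r_{i_m}(\mathcal{B}).\]
   Context: $[n]=\{1,\ldots,n\}$. $\mathbb{C}^{[m,n]}$ (resp. $\mathbb{R}_+^{[m,n]}$) denotes the set of order $m$, dimension $n$ tensors $\mathcal{A}=(a_{i_1\cdots i_m})$, $i_j\in[n]$, with complex (resp. nonnegative real) entries. For $\mathcal{A}\in\mathbb{C}^{[m,n]}$: $r_i(\mathcal{A})=\sum_{i_2,\ldots,i_m=1}^n |a_{ii_2\cdots i_m}|$, $r(\mathcal{A})=\min_{i\in[n]} r_i(\mathcal{A})$, $R(\mathcal{A})=\max_{i\in[n]} r_i(\mathcal{A})$. General product: for $\mathcal{A}\in\mathbb{C}^{[m,n]}$ ($m\ge2$) and $\mathcal{B}\in\mathbb{C}^{[k,n]}$ ($k\ge1$), $\mathcal{A}\mathcal{B}=(c_{i\alpha_1\cdots\alpha_{m-1}})$ is the order $(m-1)(k-1)+1$,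 dimension $n$ tensor with entries $c_{i\alpha_1\cdots\alpha_{m-1}}=\sum_{i_2,\ldots,i_m=1}^n a_{ii_2\cdots i_m} b_{i_2\alpha_1}\cdots b_{i_m\alpha_{m-1}}$ for $i\in[n]$, $\alpha_1,\ldots,\alpha_{m-1}\in[n]^{k-1}$ (here $b_{j\alpha}$ with $\alpha=(j_2,\ldots,j_k)$ means $b_{jj_2\cdots j_k}$). Thus $r_i(\mathcal{A}\mathcal{B})=\sum_{\alpha_1,\ldots,\alpha_{m-1}\in[n]^{k-1}}|c_{i\alpha_1\cdots\alpha_{m-1}}|$. *)

From HB Require Import structures.
From mathcomp Require Import all_boot all_order all_algebra.
From mathcomp Require Import reals complex.
Set Implicit Arguments. Unset Strict Implicit. Unset Printing Implicit Defensive.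
Import Order.TTheory GRing.Theory Num.Theory.
Local Open Scope ring_scope.
Local Open Scope complex_scope.

(* An order m, dimension n tensor A = (a_{i_1 i_2 ... i_m}) with entries in C
   is represented as a function of the first index i_1 : 'I_n and the
   remaining m-1 indices (i_2,...,i_m) : (m.-1).-tuple 'I_n.
   (Indices are 0-based: 'I_n = {0,...,n-1} stands for [n].) *)
Definition tensor (C : Type) (m n : nat) := 'I_n -> (m.-1).-tuple 'I_n -> C.

Section Tensors.
Variable C : numDomainType.

Definition rsum (m n : nat) (A : tensor C m n) (i : 'I_n) : C :=
  \sum_(t : (m.-1).-tuple 'I_n) `|A i t|.

(* R(A) = max_i r_i(A)   (all r_i are nonnegative reals, so this is the max;
   for n = 0 it is 0). *)
Definition Rmax (m n : nat) (A : tensor C m n) : C :=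
  \big[Num.max/0]_(i < n) rsum A i.

Definition nonneg_tensor (m n : nat) (A : tensor C m n) : Prop :=
  forall i t, 0 <= A i t.

(* The j-th block alpha_j in [n]^{k-1} of the index string
   (alpha_1,...,alpha_{m-1}) in [n]^{(m-1)(k-1)}. *)
Definition block (m k n : nat) (t : (m.-1 * k.-1).-tuple 'I_n) (j : 'I_m.-1)
  : (k.-1).-tuple 'I_n :=
  [tuple tnth t (mxvec_index j l) | l < k.-1].

Definition tprod (m k n : nat) (A : tensor C m n) (B : tensor C k n)
  : tensor C (m.-1 * k.-1).+1 n :=
  fun i t => \sum_(u : (m.-1).-tuple 'I_n)
               A i u * \prod_(j < m.-1) B (tnth u j) (block t j).

End Tensors.

(* Expanding the product of sums [\prod_j r_{u_j}(B)] gives one term for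
   each choice of a block [alpha_j] per factor, and these choices are exactly
   the index strings [(alpha_1,...,alpha_{m-1})] of [AB].  Hence for
   nonnegative tensors [r_i(AB)] equals [\sum_u a_{iu} \prod_j r_{u_j}(B)].
   For complex tensors, the triangle inequality bounds [r_i(AB)] by the same
   expression for [|A|] and [|B|], and each [r_{u_j}(B)] is at most [R(B)]. *)
From HB Require Import structures.
From mathcomp Require Import all_boot all_order all_algebra.
From mathcomp Require Import reals complex.
Import Order.TTheory GRing.Theory Num.Theory.
Local Open Scope ring_scope.
Local Open Scope complex_scope.

Lemma big_block_distr {S : comPzSemiRingType} {a b n : nat}
    (F : 'I_a -> b.-tuple 'I_n -> S) :
  \sum_(t : (a * b).-tuple 'I_n)
     \prod_(j < a) F j [tuple tnth t (mxvec_index j l) | l < b]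
  = \prod_(j < a) \sum_(s : b.-tuple 'I_n) F j s.
Proof.
rewrite bigA_distr_bigA /=.
pose blocks (t : (a * b).-tuple 'I_n) : {ffun 'I_a -> b.-tuple 'I_n} :=
  [ffun j => [tuple tnth t (mxvec_index j l) | l < b]].
have blocks_inj : injective blocks.
  move=> t1 t2 eq_t; apply: eq_from_tnth => x.
  case: (mxvec_indexP x) => j l.
  have := congr1 (fun f : {ffun 'I_a -> b.-tuple 'I_n} => tnth (f j) l) eq_t.
  by rewrite !ffunE !tnth_mktuple.
have blocks_bij : bijective blocks.
  apply: (inj_card_bij blocks_inj).
  by rewrite card_ffun !card_tuple !card_ord -expnM mulnC.
rewrite [RHS](reindex blocks) /=; last exact: onW_bij.
by apply: eq_bigr => t _; apply: eq_bigr => j _; rewrite ffunE.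
Qed.

Section RowSums.
Context {C : numDomainType}.

Definition normt {m n : nat} (A : tensor C m n) : tensor C m n :=
  fun i t => `|A i t|.

Lemma nonneg_normt {m n : nat} (A : tensor C m n) : nonneg_tensor (normt A).
Proof. by move=> i t; apply: normr_ge0. Qed.

Lemma rsum_normt {m n : nat} (A : tensor C m n) : rsum (normt A) =1 rsum A.
Proof. by move=> i; apply: eq_bigr => t _; rewrite /normt normr_id. Qed.

Lemma rsum_ge0 {m n : nat} (A : tensor C m n) (i : 'I_n) : 0 <= rsum A i.
Proof. by apply: sumr_ge0 => t _; apply: normr_ge0. Qed.

Lemma rsum_le_Rmax {m n : nat} (A : tensor C m n) (i : 'I_n) :
  rsum A i <= Rmax A.
Proof.
have rsum_real x : rsum A x \is Num.real by rewrite ger0_real ?rsum_ge0.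
rewrite /Rmax; elim: (index_enum _) (mem_index_enum i) => [//|j s IH].
have max_real : \big[Num.max/0]_(x <- s) rsum A x \is Num.real.
  exact: bigmax_real.
rewrite inE big_cons comparable_le_max ?real_comparable //.
by case/predU1P=> [->|/IH ->]; rewrite ?lexx ?orbT.
Qed.

Lemma nonneg_tprod {m k n : nat} (A : tensor C m n) (B : tensor C k n) :
  nonneg_tensor A -> nonneg_tensor B -> nonneg_tensor (tprod A B).
Proof.
move=> A_ge0 B_ge0 i t; apply: sumr_ge0 => u _.
by rewrite mulr_ge0 ?prodr_ge0.
Qed.

Lemma rsum_tprod_nonneg {m k n : nat} (A : tensor C m n) (B : tensor C k n) :
  nonneg_tensor A -> nonneg_tensor B -> forall i : 'I_n,
  rsum (tprod A B) i =
  \sum_(u : (m.-1).-tuple 'I_n) A i u * \prod_(j < m.-1) rsum B (tnth u j).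
Proof.
move=> A_ge0 B_ge0 i; rewrite /rsum.
under eq_bigr => t _ do rewrite ger0_norm ?nonneg_tprod //.
rewrite exchange_big /=; apply: eq_bigr => u _.
rewrite -mulr_sumr /block (big_block_distr (fun j s => B (tnth u j) s)).
congr (_ * _); apply: eq_bigr => j _; apply: eq_bigr => s _.
by rewrite ger0_norm.
Qed.

Lemma norm_tprod_le {m k n : nat} (A : tensor C m n) (B : tensor C k n) i t :
  `|tprod A B i t| <= tprod (normt A) (normt B) i t.
Proof.
apply: le_trans (ler_norm_sum _ _ _) _; apply: ler_sum => u _.
by rewrite normrM (big_morph _ (@normrM _) (@normr1 _)).
Qed.

Lemma rsum_tprod_le {m k n : nat} (A : tensor C m n) (B : tensor C k n) i :
  rsum (tprod A B) i <=
  \sum_(u : (m.-1).-tuple 'I_n) `|A i u| * \prod_(j < m.-1) rsum B (tnth u j).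
Proof.
have normAB_ge0 : nonneg_tensor (tprod (normt A) (normt B)).
  by apply: nonneg_tprod; apply: nonneg_normt.
apply: le_trans (_ : rsum (tprod (normt A) (normt B)) i <= _).
  apply: ler_sum => t _.
  by rewrite [leRHS]ger0_norm ?norm_tprod_le.
rewrite (rsum_tprod_nonneg _ _ (nonneg_normt A) (nonneg_normt B)).
apply: ler_sum => u _.
by under eq_bigr => j _ do rewrite rsum_normt.
Qed.

Lemma prod_rsum_le_Rmax {l k n : nat} (B : tensor C k n) (u : l.-tuple 'I_n) :
  \prod_(j < l) rsum B (tnth u j) <= Rmax B ^+ l.
Proof.
rewrite -[in X in _ <= _ ^+ X](card_ord l) -prodr_const.
by apply: ler_prod => j _; rewrite rsum_ge0 rsum_le_Rmax.
Qed.

End RowSums.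

Theorem lemma2p4 (R : realType) (m k n : nat)
  (A : tensor R[i] m n) (B : tensor R[i] k n) :
  (2 <= m)%N -> (1 <= k)%N -> (1 <= n)%N ->
  (forall i : 'I_n, rsum (tprod A B) i <= rsum A i * (Rmax B) ^+ (m - 1))
  /\
  (nonneg_tensor A -> nonneg_tensor B ->
   forall i : 'I_n,
     rsum (tprod A B) i =
     \sum_(u : (m.-1).-tuple 'I_n) A i u * \prod_(j < m.-1) rsum B (tnth u j)).
Proof.
move=> _ _ _; split; last exact: rsum_tprod_nonneg.
move=> i; apply: le_trans (rsum_tprod_le A B i) _.
rewrite [rsum A i]/rsum mulr_suml subn1; apply: ler_sum => u _.
by rewrite ler_wpM2l ?normr_ge0 ?prod_rsum_le_Rmax.
Qed.
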